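(* Let $0<p\leq1/2$ and $\ell\geq0$, and let $H$ be a finite bipartite graph with bipartition $X\cup Y$ such that $d_H(x,x')\leq\ell$ for all distinct $x,x'\in X$. Let $A$ be a $p$-random subset of $Y$ and let $S=|X\setminus N_H(A)|$. Then for all $r\geq0$, \[ \mathbb{P}\big(S-\mathbb{E}[S]\geq r\big)\leq\exp\left(-\frac{r^2}{4p\,(e_H(X,Y)+\ell|X|^2)}\right). \]
   Context: A $p$-random subset includes each element independently with probability $p$. $d_H(x,x')=|N_H(x)\cap N_H(x')|$ is the codegree, $N_H(A)=\bigcup_{a\in A}N_H(a)$, and $e_H(X,Y)$ is the number of edges of $H$ between $X$ and $Y$. *)

From HB Require Import structures.
From mathcomp Require Import all_boot all_order all_algebra.
From mathcomp Require Import reals.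
From mathcomp.analysis Require Import sequences exp.
Set Implicit Arguments. Unset Strict Implicit. Unset Printing Implicit Defensive.
Import Order.TTheory GRing.Theory Num.Theory.
Local Open Scope ring_scope.

(* codegree d_H(x,x') = |N_H(x) ∩ N_H(x')| *)
Definition codeg (X Y : finType) (adj : X -> Y -> bool) (x x' : X) : nat :=
  #|[set y | adj x y && adj x' y]|.

Definition nedges (X Y : finType) (adj : X -> Y -> bool) : nat :=
  #|[set xy : X * Y | adj xy.1 xy.2]|.

Definition nbhd (X Y : finType) (adj : X -> Y -> bool) (A : {set Y}) : {set X} :=
  [set x | [exists y in A, adj x y]].

Definition Sval (X Y : finType) (adj : X -> Y -> bool) (A : {set Y}) : nat :=
  #|~: nbhd adj A|.

Definition prand (R : realType) (Y : finType) (p : R) (A : {set Y}) : R :=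
  p ^+ #|A| * (1 - p) ^+ #|~: A|.

Definition ES (R : realType) (X Y : finType) (adj : X -> Y -> bool) (p : R) : R :=
  \sum_(A : {set Y}) prand p A * (Sval adj A)%:R.

Definition upper_tail (R : realType) (X Y : finType) (adj : X -> Y -> bool)
  (p r : R) : R :=
  \sum_(A : {set Y} | (Sval adj A)%:R - ES adj p >= r) prand p A.

From HB Require Import structures.
From mathcomp Require Import all_boot all_order all_algebra.
From mathcomp Require Import reals.
From mathcomp.analysis Require Import sequences exp.
From mathcomp Require Import ring lra.
Set Implicit Arguments. Unset Strict Implicit. Unset Printing Implicit Defensive.
Import Order.TTheory GRing.Theory Num.Theory.
Local Open Scope ring_scope.

(* Chernoff's method for S(A) as a function of the independent indicators
   [y \in A].  Adding y to A lowers S by at most deg y, the number of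
   neighbours of y.  Revealing y first, the conditional means of S given
   [y \in A] and [y \notin A] differ from E[S] by -(1-p)d and pd for some
   0 <= d <= deg y, and p e^(-(1-p)t) + (1-p) e^(pt) <= e^(pt^2) for t >= 0;
   induction on the set of unrevealed vertices then gives
   E[e^(lam (S - E S))] <= exp(p lam^2 sum_y deg(y)^2).  Double counting
   shows sum_y deg(y)^2 = sum_(x,x') d_H(x,x') <= V := e_H(X,Y) + l|X|^2,
   and Markov's inequality with lam = r / (2pV) concludes. *)

Lemma set_ind_D1 (T : finType) (P : {set T} -> Prop) :
  P set0 -> (forall (U : {set T}) y, y \in U -> P (U :\ y) -> P U) ->
  forall U, P U.
Proof.
move=> P0 PD1 U; have [n] := ubnP #|U|; elim: n U => // n IH U cardU.
have [-> // | [y yU]] := set_0Vmem U.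
apply: (PD1 _ y yU); apply: IH.
by move: cardU; rewrite (cardsD1 y U) yU.
Qed.

Lemma big_subset_D1 (T : finType) (V : Type) (idx : V) (op : Monoid.com_law idx)
    (U : {set T}) y (F : {set T} -> V) : y \in U ->
  \big[op/idx]_(A : {set T} | A \subset U) F A =
  \big[op/idx]_(A : {set T} | A \subset U :\ y) op (F (y |: A)) (F A).
Proof.
move=> yU; rewrite (bigID (fun A : {set T} => y \in A)) big_split /=.
congr (op _ _); last by apply: eq_bigl => A; rewrite subsetD1.
rewrite (reindex_onto (fun A => y |: A) (fun A => A :\ y)) /=; last first.
  by move=> A /andP[_ yA]; rewrite setD1K.
apply: eq_bigl => A; rewrite subsetD1 setU11 andbT subUset sub1set yU /=.
have [yA | yNA] /= := boolP (y \in A); last by rewrite setU1K ?eqxx.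
rewrite andbF; apply/andP => -[_ /eqP AE].
by move: yA; rewrite -AE setD11.
Qed.

Lemma expRN_le_quadratic (R : realType) (t : R) :
  0 <= t -> expR (- t) <= 1 - t + t ^+ 2.
Proof.
move=> t0; rewrite expRN; apply: (@le_trans _ _ (1 + t)^-1).
  by rewrite lef_pV2 ?posrE ?expR_gt0 ?expR_ge1Dx //; lra.
rewrite -[leLHS]mul1r ler_pdivrMr; nra.
Qed.

Lemma centered_bernoulli_mgf_le (R : realType) (p t : R) : 0 <= p -> 0 <= t ->
  p * expR (- ((1 - p) * t)) + (1 - p) * expR (p * t) <= expR (p * t ^+ 2).
Proof.
move=> p0 t0.
have -> : p * expR (- ((1 - p) * t)) + (1 - p) * expR (p * t) =
    expR (p * t) * (1 + p * (expR (- t) - 1)).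
  have -> : expR (- ((1 - p) * t)) = expR (p * t) * expR (- t).
    by rewrite -expRD; congr expR; ring.
  ring.
have -> : expR (p * t ^+ 2) = expR (p * t) * expR (p * (t ^+ 2 - t)).
  by rewrite -expRD; congr expR; ring.
rewrite ler_wpM2l ?expR_ge0 //; apply: le_trans (expR_ge1Dx _).
by rewrite lerD2l ler_wpM2l //; have := expRN_le_quadratic t0; lra.
Qed.

Section RandomSubset.
Variables (R : realType) (Y : finType) (p : R).

Definition prand_in (U A : {set Y}) : R := p ^+ #|A| * (1 - p) ^+ #|U :\: A|.

Definition Erand (U : {set Y}) (g : {set Y} -> R) : R :=
  \sum_(A : {set Y} | A \subset U) prand_in U A * g A.

Lemma prand_in_setT (A : {set Y}) : prand_in [set: Y] A = prand p A.
Proof. by rewrite /prand_in setTD. Qed.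

Lemma prand_in_setU1 (U A : {set Y}) y : y \in U -> A \subset U :\ y ->
  prand_in U (y |: A) = p * prand_in (U :\ y) A.
Proof.
move=> yU; rewrite subsetD1 => /andP[_ yNA].
by rewrite /prand_in cardsU1 yNA exprS setDDl -mulrA.
Qed.

Lemma prand_in_D1 (U A : {set Y}) y : y \in U -> A \subset U :\ y ->
  prand_in U A = (1 - p) * prand_in (U :\ y) A.
Proof.
move=> yU; rewrite subsetD1 => /andP[_ yNA].
rewrite /prand_in (cardsD1 y (U :\: A)) inE yNA yU exprS mulrCA.
by rewrite !setDDl setUC.
Qed.

Lemma Erand_D1 (U : {set Y}) y g : y \in U ->
  Erand U g =
  p * Erand (U :\ y) (fun A => g (y |: A)) + (1 - p) * Erand (U :\ y) g.
Proof.
move=> yU; rewrite /Erand (big_subset_D1 _ _ yU) big_split /= !mulr_sumr.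
congr (_ + _); apply: eq_bigr => A AU.
  by rewrite prand_in_setU1 // mulrA.
by rewrite (prand_in_D1 yU) // -mulrA.
Qed.

Lemma Erand_set0 g : Erand set0 g = g set0.
Proof.
rewrite /Erand (eq_bigl (pred1 set0)) => [|A]; last by rewrite subset0.
by rewrite big_pred1_eq /prand_in setD0 cards0 !expr0 !mul1r.
Qed.

Lemma eq_Erand (U : {set Y}) (g h : {set Y} -> R) :
  (forall A : {set Y}, A \subset U -> g A = h A) -> Erand U g = Erand U h.
Proof. by move=> gh; apply: eq_bigr => A AU; rewrite gh. Qed.

Lemma ErandZ (U : {set Y}) c g : Erand U (fun A => c * g A) = c * Erand U g.
Proof. by rewrite /Erand mulr_sumr; apply: eq_bigr => A _; rewrite mulrCA. Qed.

Lemma ErandB (U : {set Y}) g h :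
  Erand U (fun A => g A - h A) = Erand U g - Erand U h.
Proof. by rewrite /Erand -sumrB; apply: eq_bigr => A _; rewrite mulrBr. Qed.

Lemma Erand_cst (U : {set Y}) c : Erand U (fun _ => c) = c.
Proof.
elim/set_ind_D1: U => [|U y yU IH]; first by rewrite Erand_set0.
by rewrite (Erand_D1 _ yU) IH; ring.
Qed.

Lemma Erand_expR_recenter (U : {set Y}) (lam a : R) g :
  Erand U (fun A => expR (lam * (g A - a))) =
  expR (lam * (Erand U g - a)) *
  Erand U (fun A => expR (lam * (g A - Erand U g))).
Proof.
by rewrite -ErandZ; apply: eq_Erand => A _; rewrite -expRD; congr expR; ring.
Qed.

Definition decr_bounded (U : {set Y}) (g : {set Y} -> R) (c : Y -> R) :=
  forall A y, y \in U -> 0 <= g (A :\ y) - g (y |: A) <= c y.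

Lemma decr_boundedD1 (U : {set Y}) y g c :
  decr_bounded U g c -> decr_bounded (U :\ y) g c.
Proof. by move=> gc A z /setD1P[_ zU]; apply: gc. Qed.

Lemma decr_bounded_setU1 (U : {set Y}) y g c :
  decr_bounded U g c -> decr_bounded (U :\ y) (fun A => g (y |: A)) c.
Proof.
move=> gc A z /setD1P[zy zU] /=.
have -> : y |: (A :\ z) = (y |: A) :\ z.
  by apply/setP => x; rewrite !inE; case: eqVneq => // ->; rewrite eq_sym zy.
by rewrite setUCA; apply: gc.
Qed.

Hypotheses (p_ge0 : 0 <= p) (p_le1 : p <= 1).

Lemma prand_in_ge0 (U A : {set Y}) : 0 <= prand_in U A.
Proof. by rewrite mulr_ge0 ?exprn_ge0 ?subr_ge0. Qed.

Lemma ler_Erand (U : {set Y}) g h :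
  (forall A : {set Y}, A \subset U -> g A <= h A) -> Erand U g <= Erand U h.
Proof.
by move=> gh; apply: ler_sum => A AU; rewrite ler_wpM2l ?prand_in_ge0 ?gh.
Qed.

Lemma Erand_decr (U : {set Y}) y g c : y \in U -> decr_bounded U g c ->
  0 <= Erand (U :\ y) g - Erand (U :\ y) (fun A => g (y |: A)) <= c y.
Proof.
move=> yU gc; rewrite -ErandB.
have gcA (A : {set Y}) : A \subset U :\ y -> 0 <= g A - g (y |: A) <= c y.
  rewrite subsetD1 => /andP[_ yNA].
  have AE : A :\ y = A by apply/setDidPl; rewrite disjoint_sym disjoints1.
  by have := gc A y yU; rewrite AE.
apply/andP; split.
  by rewrite -(Erand_cst (U :\ y) 0); apply: ler_Erand => A /gcA /andP[].
by rewrite -(Erand_cst (U :\ y) (c y)); apply: ler_Erand => A /gcA /andP[].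
Qed.

Lemma Erand_expR_centered_le (c : Y -> R) (lam : R) (U : {set Y}) g :
  0 <= lam -> decr_bounded U g c ->
  Erand U (fun A => expR (lam * (g A - Erand U g))) <=
  expR (p * lam ^+ 2 * \sum_(y in U) c y ^+ 2).
Proof.
move=> lam0; elim/set_ind_D1: U g => [g _ | U y yU IH g gc].
  by rewrite !Erand_set0 subrr mulr0 big_set0 mulr0.
set U' := U :\ y; set g1 := fun A => g (y |: A).
set m1 := Erand U' g1; set m0 := Erand U' g.
have /andP[d_ge0 d_le] := Erand_decr yU gc.
rewrite -/U' -/g1 -/m1 -/m0 in d_ge0 d_le.
set d := m0 - m1 in d_ge0 d_le.
set K := expR (p * lam ^+ 2 * \sum_(z in U') c z ^+ 2).
have IH1 : Erand U' (fun A => expR (lam * (g1 A - m1))) <= K.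
  by apply: IH; apply: decr_bounded_setU1.
have IH0 : Erand U' (fun A => expR (lam * (g A - m0))) <= K.
  by apply: IH; apply: decr_boundedD1.
have mE : Erand U g = p * m1 + (1 - p) * m0 by rewrite (Erand_D1 _ yU).
rewrite (Erand_D1 _ yU) (Erand_expR_recenter U' lam _ g1).
rewrite (Erand_expR_recenter U' lam _ g) -/m1 -/m0 mE.
have -> : lam * (m1 - (p * m1 + (1 - p) * m0)) = - ((1 - p) * (lam * d)).
  by rewrite /d; ring.
have -> : lam * (m0 - (p * m1 + (1 - p) * m0)) = p * (lam * d).
  by rewrite /d; ring.
apply: (@le_trans _ _ ((p * expR (- ((1 - p) * (lam * d))) +
                        (1 - p) * expR (p * (lam * d))) * K)).
  rewrite [leRHS]mulrDl -[p * _ * K]mulrA -[(1 - p) * _ * K]mulrA.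
  by apply: lerD; rewrite ler_wpM2l ?subr_ge0 // ler_wpM2l ?expR_ge0.
apply: (@le_trans _ _ (expR (p * (lam * d) ^+ 2) * K)).
  by rewrite ler_wpM2r ?expR_ge0 ?centered_bernoulli_mgf_le ?mulr_ge0.
rewrite (big_setD1 y yU) /= [in leRHS]mulrDr expRD.
rewrite ler_wpM2r ?expR_ge0 // ler_expR.
rewrite exprMn -mulrA ler_wpM2l // ler_wpM2l ?exprn_ge0 //.
by rewrite ler_sqr ?nnegrE ?(le_trans d_ge0).
Qed.

Lemma Erand_tail_le (U : {set Y}) g (r lam : R) : 0 <= lam ->
  \sum_(A : {set Y} | (A \subset U) && (r <= g A)) prand_in U A <=
  expR (- (lam * r)) * Erand U (fun A => expR (lam * g A)).
Proof.
move=> lam0; rewrite big_mkcondr /Erand mulr_sumr; apply: ler_sum => A _.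
rewrite mulrCA -expRD; case: ifP => [rg|_]; last first.
  by rewrite mulr_ge0 ?prand_in_ge0 ?expR_ge0.
rewrite -[leLHS]mulr1 ler_wpM2l ?prand_in_ge0 //; apply: le_trans (expR_ge1Dx _).
by rewrite lerDl addrC -mulrBr mulr_ge0 ?subr_ge0.
Qed.

End RandomSubset.

Lemma card_set_sum (T : finType) (P : pred T) :
  #|[set x | P x]| = (\sum_(x : T) P x)%N.
Proof.
by rewrite -sum1dep_card big_mkcond; apply: eq_bigr => x _; case: (P x).
Qed.

Section Graph.
Variables (X Y : finType) (adj : X -> Y -> bool).

Definition deg (y : Y) : nat := #|[set x | adj x y]|.

Lemma sum_deg_sqr : (\sum_y deg y ^ 2 = \sum_x \sum_x' codeg adj x x')%N.
Proof.
transitivity (\sum_y \sum_x \sum_x' (adj x y && adj x' y : nat))%N.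
  apply: eq_bigr => y _; rewrite -mulnn /deg card_set_sum big_distrlr /=.
  by apply: eq_bigr => x _; apply: eq_bigr => x' _; rewrite mulnb.
rewrite exchange_big; apply: eq_bigr => x _; rewrite exchange_big.
by apply: eq_bigr => x' _; rewrite /codeg card_set_sum.
Qed.

Lemma nedges_sum_codeg : nedges adj = (\sum_x codeg adj x x)%N.
Proof.
rewrite /nedges card_set_sum -(pair_bigA _ (fun x y => adj x y : nat)) /=.
apply: eq_bigr => x _.
by rewrite /codeg card_set_sum; apply: eq_bigr => y _; rewrite andbb.
Qed.

Lemma sum_deg_sqr_le (R : numDomainType) (l : R) : 0 <= l ->
  (forall x x', x != x' -> (codeg adj x x')%:R <= l) ->
  \sum_y (deg y)%:R ^+ 2 <= (nedges adj)%:R + l * #|X|%:R ^+ 2.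
Proof.
move=> l0 hcod.
have -> : l * #|X|%:R ^+ 2 = \sum_(x : X) l * #|X|%:R.
  by rewrite sumr_const -[_ *+ #|_|]mulr_natr -mulrA -expr2.
under eq_bigr do rewrite -natrX.
rewrite -natr_sum sum_deg_sqr nedges_sum_codeg !natr_sum -big_split /=.
apply: ler_sum => x _; rewrite natr_sum (bigD1 x) //= lerD2l.
apply: (@le_trans _ _ (\sum_(x' | x' != x) l)).
  by apply: ler_sum => x' x'x; apply: hcod; rewrite eq_sym.
by rewrite sumr_const -[l *+ _]mulr_natr ler_wpM2l // ler_nat max_card.
Qed.

Lemma nbhdU (A B : {set Y}) : nbhd adj (A :|: B) = nbhd adj A :|: nbhd adj B.
Proof.
apply/setP => x; rewrite /nbhd !inE; apply/existsP/orP => [[y]|].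
  by rewrite inE => /andP[/orP[] yAB xy]; [left | right]; apply/existsP; exists y;
    rewrite yAB.
by case=> /existsP[y /andP[yAB xy]]; exists y; rewrite inE yAB ?orbT.
Qed.

Lemma nbhd1 y : nbhd adj [set y] = [set x | adj x y].
Proof.
apply/setP => x; rewrite /nbhd !inE; apply/existsP/idP => [[z] | xy].
  by rewrite inE => /andP[/eqP ->].
by exists y; rewrite set11.
Qed.

Lemma Sval_D1 (A : {set Y}) y : Sval adj (A :\ y) =
  (Sval adj (y |: A) + #|~: nbhd adj (A :\ y) :&: [set x | adj x y]|)%N.
Proof.
have -> : y |: A = [set y] :|: (A :\ y).
  by apply/setP => z; rewrite !inE; case: eqVneq.
rewrite /Sval nbhdU nbhd1 setCU setIC -setDE addnC.
by rewrite (cardsID [set x | adj x y]).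
Qed.

Lemma Sval_decr_bounded (R : realType) :
  decr_bounded [set: Y] (fun A => (Sval adj A)%:R : R) (fun y => (deg y)%:R).
Proof.
move=> A y _; rewrite Sval_D1 natrD addrAC subrr add0r ler0n ler_nat.
by rewrite subset_leq_card ?subsetIr.
Qed.

End Graph.

(* Also valid for [V = 0], where both sides vanish because [x / 0 = 0]. *)
Lemma chernoff_exponentE (R : numFieldType) (p V r : R) : p != 0 ->
  - (r / (2 * p * V) * r) + p * (r / (2 * p * V)) ^+ 2 * V =
  - (r ^+ 2 / (4 * p * V)).
Proof.
move=> p0; have [-> | V0] := eqVneq V 0; last first.
  by field; rewrite V0 p0.
by rewrite !(mulr0, invr0, mul0r, oppr0, addr0).
Qed.

Theorem lemma3p4 (R : realType) (X Y : finType) (adj : X -> Y -> bool)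
  (p l : R) (hp0 : 0 < p) (hp1 : p <= 1 / 2) (hl : 0 <= l)
  (hcod : forall x x' : X, x != x' -> (codeg adj x x')%:R <= l)
  (r : R) (hr : 0 <= r) :
  upper_tail adj p r <=
    expR (- (r ^+ 2 / (4 * p * ((nedges adj)%:R + l * (#|X|%:R) ^+ 2)))).
Proof.
have p_ge0 : 0 <= p by exact: ltW.
have p_le1 : p <= 1 by lra.
set V := _ + _; set lam := r / (2 * p * V).
have lam_ge0 : 0 <= lam by rewrite divr_ge0 // !mulr_ge0 // addr_ge0 ?mulr_ge0.
set S := fun A => (Sval adj A)%:R : R.
have ES_E : ES adj p = Erand p [set: Y] S.
  by apply: eq_big => [A | A _]; rewrite ?subsetT ?prand_in_setT.
have tailE : upper_tail adj p r =
    \sum_(A : {set Y} | (A \subset setT) && (r <= S A - ES adj p))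
      prand_in p setT A.
  by apply: eq_big => [A | A _]; rewrite ?subsetT ?prand_in_setT.
rewrite tailE; apply: le_trans (Erand_tail_le p_ge0 p_le1 _ _ _ lam_ge0) _.
rewrite ES_E; apply: le_trans (ler_wpM2l (expR_ge0 _)
  (Erand_expR_centered_le p_ge0 p_le1 lam_ge0 (Sval_decr_bounded adj R))) _.
rewrite -expRD ler_expR -(chernoff_exponentE V r (lt0r_neq0 hp0)) lerD2l.
rewrite ler_wpM2l ?(mulr_ge0 p_ge0) ?exprn_ge0 //.
by rewrite (eq_bigl xpredT) => [|y]; [exact: sum_deg_sqr_le | rewrite inE].
Qed.
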